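(* Under the setup described in the context (a connected graph $G$ on $n$ vertices with $\mathrm{col}(G)=d\geq 3$, $M=K_1\vee G$ with apex $w$, and an $m$-fold cover $\mathcal{H}=(L,H)$ of $M$ with $m\geq d+3$ in which $E_H(L(u),L(v))$ is a perfect matching for every $uv\in E(M)$): if $L(w)$ contains exactly $s$ vertices that are not level vertices, then $$P_{DP}(M,\mathcal{H})\geq m\,P_{DP}(G,m-1)+s\,(m-d-2)^{n-2}.$$
   Context: All graphs are finite and simple. $\mathrm{col}(G)$ is the smallest $d$ such that some ordering of $V(G)$ has each vertex with at most $d-1$ earlier neighbors. $M=K_1\vee G$ is the join of $G$ with a single new vertex $w$. A cover of a graph $G$ is a pair $\mathcal{H}=(L,H)$ where $H$ is a graph and $L:V(G)\to\mathcal{P}(V(H))$ satisfies: (1) the sets $L(u)$ partition $V(H)$; (2) each $H[L(u)]$ is complete; (3) if $E_H(L(u),L(v))\neq\emptyset$ then $u=v$ or $uv\in E(G)$; (4) if $uv\in E(G)$ then $E_H(L(u),L(v))$ is a matching. $E_H(S,U)$ is the set of edges of $H$ between $S$ and $U$; the cover is $m$-fold if all $|L(u)|=m$; an $\mathcal{H}$-coloring is an independent set of $H$ of size $|V(G)|$, $P_{DP}(G,\mathcal{H})$ counts them, and $P_{DP}(G,m)$ is the minimum of $P_{DP}(G,\mathcal{H})$ over $m$-fold covers. Setup: write $L(w)=\{(w,j):j\in[m]\}$; for $j\in[m]$ and $v\in V(G)$ let $H^{(j)}=H-N_H[(w,j)]$ and $L^{(j)}(v)=L(v)\setminus N_H((w,j))$,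 so $\mathcal{H}^{(j)}=(L^{(j)},H^{(j)})$ is an $(m-1)$-fold cover of $G$. Cross-edges of $H^{(j)}$ are its edges joining $L^{(j)}(x)$ and $L^{(j)}(y)$ for distinct $x,y\in V(G)$. The vertex $(w,t)$ is a level vertex if $H^{(t)}$ has exactly $|E(G)|(m-1)$ cross-edges. *)

From HB Require Import structures.
From mathcomp Require Import all_boot.
Set Implicit Arguments. Unset Strict Implicit. Unset Printing Implicit Defensive.

Definition simple_graph (T : finType) (r : rel T) : bool :=
  [forall x, ~~ r x x] && [forall x, forall y, r x y ==> r y x].

Definition connected_graph (T : finType) (r : rel T) : Prop :=
  forall x y, connect r x y.

Definition num_edges (T : finType) (r : rel T) : nat :=
  #|[set E : {set T} | [exists u, exists v, (E == [set u; v]) && r u v]]|.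

Definition col_ok (T : finType) (r : rel T) (d : nat) : Prop :=
  exists s : seq T, [/\ uniq s, (forall v, v \in s) &
     forall s1 x s2, s = s1 ++ x :: s2 -> count (r x) s1 < d].

Definition is_col (T : finType) (r : rel T) (d : nat) : Prop :=
  col_ok r d /\ forall d', col_ok r d' -> d <= d'.

(* M = K_1 \/ G : vertex None is the apex w. *)
Definition join_rel (T : finType) (r : rel T) : rel (option T) :=
  fun a b => match a, b with
   | Some x, Some y => r x y
   | None, Some _ | Some _, None => true
   | None, None => false end.

Definition is_cover (W X : finType) (eW : rel W) (h : rel X)
    (L : W -> {set X}) : bool :=
  [&& simple_graph h,
      [forall x, exists u, x \in L u],
      [forall u, forall v, forall x, (x \in L u) && (x \in L v) ==> (u == v)],
      [forall u, forall x, forall y, [&& x \in L u, y \in L u & x != y] ==> h x y],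
      [forall u, forall v, forall x, forall y,
          [&& x \in L u, y \in L v & h x y] ==> (u == v) || eW u v] &
      (* (4) for uv in E(G), E_H(L(u),L(v)) is a matching
         (stated for both orders since eW is symmetric) *)
      [forall u, forall v, eW u v ==> [forall x, forall y, forall y',
          [&& x \in L u, y \in L v, y' \in L v, h x y & h x y'] ==> (y == y')]]].

Definition mfold (W X : finType) (L : W -> {set X}) (m : nat) : bool :=
  [forall u, #|L u| == m].

(* every E_H(L(u),L(v)), uv in E, is a perfect matching (given matching + equal
   sizes, it suffices that each vertex of L(u) has a neighbour in L(v)). *)
Definition perfect_matchings (W X : finType) (eW : rel W) (h : rel X)
    (L : W -> {set X}) : bool :=
  [forall u, forall v, eW u v ==>
     [forall x in L u, exists y in L v, h x y]].

Definition indep (X : finType) (h : rel X) (I : {set X}) : bool :=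
  [forall x in I, forall y in I, ~~ h x y].

Definition ncol (W X : finType) (h : rel X) : nat :=
  #|[set I : {set X} | indep h I & #|I| == #|W|]|.

Definition canL (W : finType) (m : nat) (u : W) : {set W * 'I_m} :=
  [set x | x.1 == u].

(* P_DP(G, m): minimum over all m-fold covers (every m-fold cover is isomorphic
   to a canonical one; #|{set W * 'I_m}| is an upper bound for all counts). *)
Definition PDP (W : finType) (eW : rel W) (m : nat) : nat :=
  \big[minn/#|{set W * 'I_m}|]_(E : {set (W * 'I_m) * (W * 'I_m)} |
        is_cover eW (fun a b => (a, b) \in E) (@canL W m))
     ncol W (fun a b => (a, b) \in E).

Definition closed_nbhd (X : finType) (h : rel X) (t : X) : {set X} :=
  [set x | (x == t) || h t x].

Definition cross_edges (V X : finType) (h : rel X) (L : option V -> {set X})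
    (t : X) : {set {set X}} :=
  [set E : {set X} | [exists a, exists b,
     [&& E == [set a; b], h a b, a \notin closed_nbhd h t, b \notin closed_nbhd h t &
         [exists u, exists v, [&& u != v, a \in L (Some u) & b \in L (Some v)]]]]].

Definition level_vertex (V X : finType) (e : rel V) (h : rel X)
    (L : option V -> {set X}) (m : nat) (t : X) : bool :=
  #|cross_edges h L t| == num_edges e * (m - 1).

From HB Require Import structures.
From mathcomp Require Import all_boot zify.
Set Implicit Arguments. Unset Strict Implicit. Unset Printing Implicit Defensive.

(* An independent transversal of H contains exactly one vertex t of L(w), and
   removing it leaves an independent transversal of the (m-1)-fold cover H^(t)
   of G; hence P_DP(M, H) >= sum_t P_DP(G, H^(t)) >= m P_DP(G, m-1) plus a
   correction for every non-level t. If t is not level, some matching of H^(t)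
   between lists L^(t)(u) and L^(t)(v) is not perfect, so there are a in
   L^(t)(u) and b in L^(t)(v) without neighbours in the other list. Adding the
   edge ab yields an (m-1)-fold cover H' with P(G, H^(t)) >= P(G, H') + #{colorings
   of H^(t) through a and b}, and colouring the other n - 2 vertices greedily
   along a degeneracy ordering leaves at least (m-1) - (d+1) choices each. *)

Lemma bigmin_leq (I : finType) (P : pred I) (F : I -> nat) x j :
  P j -> \big[minn/x]_(i | P i) F i <= F j.
Proof.
move=> Pj; rewrite -big_filter.
have : j \in filter P (index_enum I) by rewrite mem_filter Pj mem_index_enum.
elim: (filter P _) => //= i r IH; rewrite inE big_cons => /predU1P [<-|/IH jr].
  exact: geq_minl.
exact: leq_trans (geq_minr _ _) jr.
Qed.

Lemma card_dep_pairs (A B : finType) (P : pred A) (Q : A -> pred B) :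
  #|[set p : A * B | P p.1 && Q p.1 p.2]| = \sum_(a | P a) #|[set b | Q a b]|.
Proof.
rewrite -sum1_card (eq_bigr (fun a => \sum_(b | Q a b) 1)); last first.
  by move=> a _; rewrite -sum1_card; apply: eq_bigl => b; rewrite inE.
by rewrite pair_big_dep /=; apply: eq_bigl => -[a b]; rewrite inE.
Qed.

Lemma count_card (T : finType) (a : pred T) (s : seq T) :
  uniq s -> count a s = #|[set x | (x \in s) && a x]|.
Proof.
move=> us; rewrite -size_filter.
have -> : [set x | (x \in s) && a x] = [set x in filter a s].
  by apply/setP => x; rewrite !inE mem_filter andbC.
by rewrite cardsE; apply/esym/card_uniqP; exact: filter_uniq.
Qed.

Definition edge_set (T : finType) (r : rel T) : {set {set T}} :=
  [set E : {set T} | [exists u, exists v, (E == [set u; v]) && r u v]].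

Lemma card_edge_set (T : finType) (r : rel T) :
  irreflexive r -> symmetric r ->
  #|edge_set r| * 2 = #|[set p : T * T | r p.1 p.2]|.
Proof.
move=> rirr rsym; pose ends (p : T * T) : {set T} := [set p.1; p.2].
rewrite -!sum1_card (partition_big ends (mem (edge_set r))) /=; last first.
  move=> [a b]; rewrite !inE /= => rab.
  by apply/existsP; exists a; apply/existsP; exists b; rewrite eqxx.
rewrite big_distrl /=; apply: eq_bigr => E.
rewrite inE => /existsP [u /existsP [v /andP [/eqP -> ruv]]]; rewrite mul1n.
have uv : u != v by apply: contraTneq ruv => ->; rewrite rirr.
rewrite (bigD1 (u, v)) /=; last by rewrite inE ruv eqxx.
rewrite (bigD1 (v, u)) /=; last first.
  rewrite inE rsym ruv /ends /= setUC eqxx /= -pair_eqE /=.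
  by apply/negP => /andP [_ /eqP vu]; rewrite vu eqxx in uv.
rewrite big1 // => -[a b]; rewrite inE /= /ends => /andP [/andP [/andP [rab /eqP Eab]]].
have ha : a \in [set u; v] by rewrite -Eab !inE eqxx.
have hb : b \in [set u; v] by rewrite -Eab !inE eqxx orbT.
by move: ha hb rab; rewrite !inE => /orP [] /eqP -> /orP [] /eqP ->; rewrite ?eqxx ?rirr.
Qed.

Lemma eq_ncol (W T : finType) (g g' : rel T) : g =2 g' -> ncol W g = ncol W g'.
Proof.
move=> gg'; apply: eq_card => I; rewrite !inE /indep.
by congr andb; apply: eq_forallb => x; congr implb; apply: eq_forallb => y; rewrite gg'.
Qed.

Lemma simple_graph_irr (T : finType) (r : rel T) : simple_graph r -> irreflexive r.
Proof. by case/andP => /forallP rirr _ x; apply/negbTE. Qed.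

Lemma simple_graph_sym (T : finType) (r : rel T) : simple_graph r -> symmetric r.
Proof.
case/andP => _ /forallP rsym x y.
by apply/idP/idP => rxy; [move/forallP: (rsym x) => /(_ y) | move/forallP: (rsym y) => /(_ x)];
  rewrite rxy.
Qed.

Definition add_edge (T : eqType) (r : rel T) (p q : T) : rel T :=
  fun x y => [|| r x y, (x == p) && (y == q) | (x == q) && (y == p)].

Lemma add_edge_subrel (T : eqType) (r : rel T) p q : subrel r (add_edge r p q).
Proof. by move=> x y; rewrite /add_edge => ->. Qed.

Section CoverFacts.
Variables (W X : finType) (eW : rel W) (h : rel X) (L : W -> {set X}).
Hypothesis hcov : is_cover eW h L.

Lemma cover_sym : symmetric h.
Proof. by case/and5P: hcov => /simple_graph_sym. Qed.

Lemma cover_irr : irreflexive h.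
Proof. by case/and5P: hcov => /simple_graph_irr. Qed.

Lemma cover_list_uniq u v x : x \in L u -> x \in L v -> u = v.
Proof.
case/and5P: hcov => _ _ /forallP H _ _ xu xv.
by apply/eqP; have := forallP (forallP (H u) v) x; rewrite xu xv.
Qed.

Lemma cover_clique u x y : x \in L u -> y \in L u -> x != y -> h x y.
Proof.
case/and5P: hcov => _ _ _ /forallP H _ xu yu xy.
by have := forallP (forallP (H u) x) y; rewrite xu yu xy.
Qed.

Lemma cover_edge u v x y : x \in L u -> y \in L v -> h x y -> (u == v) || eW u v.
Proof.
case/and5P: hcov => _ _ _ _ /andP [/forallP H _] xu yv hxy.
by have := forallP (forallP (forallP (H u) v) x) y; rewrite xu yv hxy.
Qed.

Lemma cover_matching u v x y y' : eW u v -> x \in L u -> y \in L v -> y' \in L v ->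
  h x y -> h x y' -> y = y'.
Proof.
case/and5P: hcov => _ _ _ _ /andP [_ /forallP H] euv xu yv y'v hxy hxy'.
move/forallP: (H u) => /(_ v); rewrite euv => /forallP /(_ x) /forallP /(_ y) /forallP /(_ y').
by rewrite xu yv y'v hxy hxy' => /eqP.
Qed.

End CoverFacts.

Section CanonicalCovers.
Variables (V : finType) (e : rel V) (k : nat).
Hypotheses (eirr : irreflexive e) (esym : symmetric e).

Definition canonical_cover (g : rel (V * 'I_k)) : Prop :=
  [/\ symmetric g, irreflexive g,
      forall p q, p.1 = q.1 -> p != q -> g p q,
      forall p x c c', x != p.1 -> g p (x, c) -> g p (x, c') -> c = c' &
      forall p q, g p q -> p.1 != q.1 -> e p.1 q.1].

Lemma eq_canonical_cover g g' : g =2 g' -> canonical_cover g -> canonical_cover g'.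
Proof.
move=> gg' [gsym girr gclq gmatch gedge]; split.
- by move=> p q; rewrite -!gg' gsym.
- by move=> p; rewrite -gg' girr.
- by move=> p q pq npq; rewrite -gg'; exact: gclq.
- by move=> p x c c' xp; rewrite -!gg'; exact: gmatch.
- by move=> p q; rewrite -gg'; exact: gedge.
Qed.

Lemma canonical_cover_is_cover g : canonical_cover g -> is_cover e g (@canL V k).
Proof.
move=> [gsym girr gclq gmatch gedge]; apply/and5P; split.
- apply/andP; split; apply/forallP => x; first by rewrite girr.
  by apply/forallP => y; rewrite gsym; apply/implyP.
- by apply/forallP => x; apply/existsP; exists x.1; rewrite inE.
- apply/forallP => u; apply/forallP => v; apply/forallP => x; rewrite !inE.
  by apply/implyP => /andP [/eqP <- /eqP <-].
- apply/forallP => u; apply/forallP => x; apply/forallP => y; rewrite !inE.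
  by apply/implyP => /and3P [/eqP xu /eqP yu xy]; apply: gclq; rewrite ?xu ?yu.
apply/andP; split.
  apply/forallP => u; apply/forallP => v; apply/forallP => x; apply/forallP => y.
  rewrite !inE; apply/implyP => /and3P [/eqP <- /eqP <- gxy].
  by case: (eqVneq x.1 y.1) => //= xy; exact: gedge.
apply/forallP => u; apply/forallP => v; apply/implyP => euv.
apply/forallP => x; apply/forallP => -[y c]; apply/forallP => -[y' c']; rewrite !inE /=.
apply/implyP => /and5P [/eqP xu /eqP -> /eqP -> g1 g2].
have vx : v != x.1 by rewrite xu; apply: contraTneq euv => ->; rewrite eirr.
by rewrite (gmatch x v c c' vx g1 g2).
Qed.

Lemma PDP_leq_ncol g : canonical_cover g -> PDP e k <= ncol V g.
Proof.
move=> gcov; pose E := [set p | g p.1 p.2].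
have gE : (fun a b => (a, b) \in E) =2 g by move=> a b; rewrite inE.
rewrite -(eq_ncol V gE); apply: bigmin_leq; apply: canonical_cover_is_cover.
by apply: eq_canonical_cover gcov => a b; rewrite gE.
Qed.

Lemma card_nbrs_in_prefix (p : seq V) x u v d : uniq p -> count (e x) p < d ->
  #|[set w in u |: (v |: [set w in p]) | e x w]| <= d.+1.
Proof.
move=> up; rewrite (count_card _ up) => degp.
have sub : [set w in u |: (v |: [set w in p]) | e x w]
    \subset u |: (v |: [set w | (w \in p) && e x w]).
  by apply/subsetP => w; rewrite !inE => /andP [/or3P [->|->|->] ->]; rewrite ?orbT.
have := cardsU1 u (v |: [set w | (w \in p) && e x w]).
have := cardsU1 v [set w | (w \in p) && e x w].
have := subset_leq_card sub; lia.
Qed.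

Section PinnedColorings.
Variables (g : rel (V * 'I_k)) (u v : V) (i j o : 'I_k).
Hypothesis gcov : canonical_cover g.

(* Independent colorings of G[S] sending u to i and v to j; [o] is a dummy
   colour outside S, so that such colorings are total functions on V. *)
Definition pinned_colorings (S : {set V}) : {set {ffun V -> 'I_k}} :=
  [set f : {ffun V -> 'I_k} | [&& f u == i, f v == j,
     [forall w, (w \notin S) ==> (f w == o)] &
     [forall w in S, forall z in S, ~~ g (w, f w) (z, f z)]]].

Definition recolor (f : {ffun V -> 'I_k}) (x : V) (c : 'I_k) : {ffun V -> 'I_k} :=
  [ffun w => if w == x then c else f w].

Lemma card_forbidden_colors (f : {ffun V -> 'I_k}) (S : {set V}) x : x \notin S ->
  #|[set c | [exists w in S, g (x, c) (w, f w)]]| <= #|[set w in S | e x w]|.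
Proof.
case: gcov => gsym _ _ gmatch gedge xS.
pose witness c := odflt x [pick w in S | g (x, c) (w, f w)].
have witnessP c : [exists w in S, g (x, c) (w, f w)] ->
    (witness c \in S) && g (x, c) (witness c, f (witness c)).
  by move=> /existsP [w0 w0P]; rewrite /witness; case: pickP => [w ->|/(_ w0)]; rewrite ?w0P.
have xw w : w \in S -> x != w by apply: contraTneq => <-.
rewrite -(card_in_imset (f := witness)).
  apply: subset_leq_card; apply/subsetP => _ /imsetP [c + ->].
  rewrite !inE => /witnessP /andP [wS gxw]; rewrite wS (gedge _ _ gxw) //=.
  exact: xw.
move=> c c'; rewrite !inE => /witnessP /andP [wS gc] /witnessP /andP [_ gc'] wcc'.
rewrite -wcc' gsym in gc'; rewrite gsym in gc.
by apply: (gmatch _ _ _ _ _ gc gc'); exact: xw.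
Qed.

Lemma recolor_pinned f (S : {set V}) x c :
  u \in S -> v \in S -> x \notin S -> f \in pinned_colorings S ->
  [forall w in S, ~~ g (x, c) (w, f w)] -> recolor f x c \in pinned_colorings (x |: S).
Proof.
case: gcov => gsym girr _ _ _ uS vS xS.
have Sx w : w \in S -> (w == x) = false by move=> wS; apply: contraNF xS => /eqP <-.
rewrite !inE !ffunE (Sx u uS) (Sx v vS) /=.
case/and4P => -> -> /forallP fo /forallP fS /forallP fx /=; apply/andP; split.
  apply/forallP => w; rewrite !inE negb_or ffunE.
  by apply/implyP => /andP [/negbTE -> wS]; exact: (implyP (fo w)).
apply/forallP => w; apply/implyP; rewrite !inE => /orP [/eqP ->|wS];
  apply/forallP => z; apply/implyP; rewrite !inE => /orP [/eqP ->|zS];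
  rewrite !ffunE ?eqxx ?girr ?Sx //.
- exact: (implyP (fx z) zS).
- by rewrite gsym; exact: (implyP (fx w) wS).
- by move: (fS w); rewrite wS => /forallP /(_ z); rewrite zS.
Qed.

Lemma card_pinned_extend (S : {set V}) x N :
  u \in S -> v \in S -> x \notin S -> #|[set w in S | e x w]| <= N ->
  #|pinned_colorings S| * (k - N) <= #|pinned_colorings (x |: S)|.
Proof.
move=> uS vS xS degx.
pose allowed f := [set c | [forall w in S, ~~ g (x, c) (w, f w)]].
pose ext := [set p | (p.1 \in pinned_colorings S) && (p.2 \in allowed p.1)].
have ext_inj : {in ext &, injective (fun p => recolor p.1 x p.2)}.
  move=> [f c] [f' c']; rewrite !inE /= => /andP [/and4P [_ _ /forallP fo _] _].
  move=> /andP [/and4P [_ _ /forallP fo' _] _] ff'.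
  have := congr1 (fun F : {ffun V -> 'I_k} => F x) ff'; rewrite !ffunE eqxx => <-.
  congr pair; apply/ffunP => w; case: (eqVneq w x) => [->|wx].
    by move: (fo x) (fo' x); rewrite xS /= => /eqP -> /eqP ->.
  by have := congr1 (fun F : {ffun V -> 'I_k} => F w) ff'; rewrite !ffunE (negbTE wx).
have ext_sub : [set recolor p.1 x p.2 | p in ext] \subset pinned_colorings (x |: S).
  apply/subsetP => _ /imsetP [[f c] + ->]; rewrite inE /= => /andP [fP].
  by rewrite inE; exact: recolor_pinned.
apply: leq_trans (subset_leq_card ext_sub); rewrite (card_in_imset ext_inj).
rewrite (card_dep_pairs (mem (pinned_colorings S)) (fun f c => c \in allowed f)).
rewrite -sum_nat_const; apply: leq_sum => f _.
have -> : [set c | c \in allowed f] = ~: [set c | [exists w in S, g (x, c) (w, f w)]].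
  by apply/setP => c; rewrite !inE negb_exists; apply: eq_forallb => w; rewrite negb_and implybE.
have := cardsC [set c | [exists w in S, g (x, c) (w, f w)]].
rewrite card_ord => hk; rewrite -[X in X - N]hk leq_subLR leq_add2r.
exact: leq_trans (card_forbidden_colors f xS) degx.
Qed.

Lemma pinned_colorings_pair : u != v -> ~~ g (u, i) (v, j) ->
  0 < #|pinned_colorings [set u; v]|.
Proof.
case: gcov => gsym girr _ _ _ uv guv; rewrite card_gt0; apply/set0Pn.
exists [ffun w => if w == u then i else if w == v then j else o].
rewrite inE !ffunE !eqxx [v == u]eq_sym (negbTE uv) eqxx /=; apply/andP; split.
  apply/forallP => w; rewrite ffunE !inE negb_or.
  by apply/implyP => /andP [/negbTE -> /negbTE ->].
apply/forallP => w; apply/implyP; rewrite !inE => /orP [] /eqP ->;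
  apply/forallP => z; apply/implyP; rewrite !inE => /orP [] /eqP ->;
  by rewrite !ffunE ?eqxx ?girr // eq_sym (negbTE uv) ?girr // gsym.
Qed.

(* Greedy colouring along a degeneracy ordering: every vertex other than u and v
   has at most d - 1 earlier neighbours, plus possibly u and v. *)
Lemma card_pinned_greedy d : u != v -> ~~ g (u, i) (v, j) -> col_ok e d ->
  (k - d.+1) ^ (#|V| - 2) <= #|pinned_colorings setT|.
Proof.
move=> uv guv [s [us alls hcol]].
pose other x := (x != u) && (x != v).
pose Sp (p : seq V) := u |: (v |: [set w in p]).
suff grow p1 p2 : s = p1 ++ p2 -> (k - d.+1) ^ count other p1 <= #|pinned_colorings (Sp p1)|.
  have -> : #|V| - 2 = count other s.
    rewrite (count_card _ us); have -> : [set x | (x \in s) && other x] = ~: [set u; v].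
      by apply/setP => w; rewrite !inE alls negb_or.
    by rewrite cardsCs setCK cards2 uv.
  have -> : setT = Sp s by apply/setP => w; rewrite !inE alls !orbT.
  by apply: (grow s [::]); rewrite cats0.
elim/last_ind: p1 p2 => [|p x IH] p2 hs.
  have -> : Sp [::] = [set u; v] by apply/setP => w; rewrite !inE orbF.
  exact: pinned_colorings_pair.
have hs' : s = p ++ x :: p2 by rewrite hs cat_rcons.
have Sx : Sp (rcons p x) = x |: Sp p.
  by apply/setP => w; rewrite !inE mem_rcons inE; case: (w == x); rewrite ?orbT.
rewrite -cats1 count_cat /= addn0 cats1 Sx.
case: (boolP (other x)) => [/andP [xu xv]|nox] /=; last first.
  have xS : x \in Sp p.
    by move: nox; rewrite /other negb_and !negbK !inE => /orP [] ->; rewrite ?orbT.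
  have -> : x |: Sp p = Sp p by apply/setUidPr; rewrite sub1set.
  by rewrite addn0 (IH _ hs').
have xp : x \notin p.
  by move: us; rewrite hs' cat_uniq /= negb_or => /and3P [_ /andP [] ].
have xS : x \notin Sp p by rewrite !inE (negbTE xu) (negbTE xv) (negbTE xp).
have degx : #|[set w in Sp p | e x w]| <= d.+1.
  apply: card_nbrs_in_prefix (hcol _ _ _ hs').
  by apply: (subseq_uniq (prefix_subseq p (x :: p2))); rewrite -hs'.
have uS : u \in Sp p by rewrite !inE eqxx.
have vS : v \in Sp p by rewrite !inE eqxx orbT.
apply: leq_trans (card_pinned_extend uS vS xS degx).
by rewrite addn1 expnS mulnC leq_mul2r (IH _ hs') orbT.
Qed.

End PinnedColorings.

Lemma unmatched_partner g u v a : canonical_cover g -> u != v ->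
  (forall c, ~~ g (u, a) (v, c)) -> exists b, forall c, ~~ g (v, b) (u, c).
Proof.
case=> gsym _ _ gmatch _ uv ha.
case: (boolP [exists b, [forall c, ~~ g (v, b) (u, c)]]).
  by case/existsP => b /forallP; exists b.
(* Otherwise the neighbours in fiber u of the vertices of fiber v give an
   injection of 'I_k into 'I_k that misses a. *)
rewrite negb_exists => /forallP hb; exfalso.
pose nb b := odflt a [pick c | g (v, b) (u, c)].
have nbP b : g (v, b) (u, nb b).
  rewrite /nb; case: pickP => [//|none]; move: (hb b); rewrite negb_forall.
  by case/existsP => c; rewrite none.
have nb_inj : injective nb.
  move=> b b' nbb'; have := nbP b; have := nbP b'; rewrite nbb' !(gsym _ (u, _)).
  by move=> g1 g2; apply: (gmatch _ _ _ _ _ g2 g1); rewrite eq_sym.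
have : nb @: [set: 'I_k] \subset ~: [set a].
  apply/subsetP => _ /imsetP [b _ ->]; rewrite !inE; apply/eqP => nba.
  by have := ha b; rewrite gsym -nba nbP.
move/subset_leq_card; rewrite card_imset // cardsT cardsCs setCK cards1 card_ord.
by rewrite leqNgt ltn_subrL (leq_ltn_trans (leq0n a) (ltn_ord a)).
Qed.

Lemma canonical_cover_add_edge g u v a b : canonical_cover g -> e u v ->
  (forall c, ~~ g (u, a) (v, c)) -> (forall c, ~~ g (v, b) (u, c)) ->
  canonical_cover (add_edge g (u, a) (v, b)).
Proof.
case=> gsym girr gclq gmatch gedge euv ha hb.
have uv : u != v by apply: contraTneq euv => ->; rewrite eirr.
have gg' : subrel g (add_edge g (u, a) (v, b)) by exact: add_edge_subrel.
split.
- by move=> p q; rewrite /add_edge gsym; congr orb; rewrite orbC; congr orb; rewrite andbC.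
- move=> p; rewrite /add_edge girr /=; apply/negP => /orP [] /andP [/eqP -> /eqP [] /eqP].
    by rewrite (negbTE uv).
  by rewrite eq_sym (negbTE uv).
- by move=> p q pq npq; rewrite gg' // gclq.
- move=> p x c c' xp.
  pose special c0 := ((p == (u, a)) && ((x, c0) == (v, b))) ||
                     ((p == (v, b)) && ((x, c0) == (u, a))).
  have special_nog c0 c1 : special c0 -> ~~ g p (x, c1).
    by case/orP => /andP [/eqP -> /eqP [-> _]]; [exact: ha | exact: hb].
  have special_val c0 : special c0 -> c0 = if p.1 == u then b else a.
    by case/orP => /andP [/eqP -> /eqP [_ ->]] /=; rewrite ?eqxx // eq_sym (negbTE uv).
  case/orP => [gc|sc] /orP [gc'|sc'].
  + exact: gmatch gc gc'.
  + by move: (special_nog _ c sc'); rewrite gc.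
  + by move: (special_nog _ c' sc); rewrite gc'.
  + by rewrite (special_val _ sc) (special_val _ sc').
- move=> p q; rewrite /add_edge => /or3P [gpq|/andP [/eqP -> /eqP ->]|/andP [/eqP -> /eqP ->]] //.
    exact: gedge.
  by rewrite esym.
Qed.

(* Independent transversals of [g'] and colorings of [g] through both (u, a) and
   (v, b) are disjoint families of independent transversals of [g]. *)
Lemma ncol_add_edge (g g' : rel (V * 'I_k)) u v a b o :
  subrel g g' -> g' (u, a) (v, b) ->
  ncol V g' + #|pinned_colorings g u v a b o setT| <= ncol V g.
Proof.
move=> gg' g'ab.
pose graph (f : {ffun V -> 'I_k}) : {set V * 'I_k} := [set (w, f w) | w : V].
have graph_inj : injective graph.
  move=> f f' ff'; apply/ffunP => w.
  have : (w, f w) \in graph f' by rewrite -ff'; apply: imset_f.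
  by case/imsetP => w' _ [-> ->].
have card_graph f : #|graph f| = #|V| by rewrite card_imset // => w w' [].
pose A1 := [set I | indep g' I & #|I| == #|V|].
pose A2 := graph @: pinned_colorings g u v a b o setT.
have A12 : A1 :&: A2 = set0.
  apply/setP => I; rewrite !inE; apply/negP => /andP [/andP [ind _] /imsetP [f]].
  rewrite inE => /and4P [/eqP fu /eqP fv _ _] Igraph; rewrite {}Igraph in ind.
  move/forallP: ind => /(_ (u, a)) /implyP; rewrite -fu imset_f //.
  move=> /(_ isT) /forallP /(_ (v, b)) /implyP; rewrite -fv imset_f // => /(_ isT).
  by rewrite fu fv g'ab.
have sub : A1 :|: A2 \subset [set I | indep g I & #|I| == #|V|].
  apply/subsetP => I; rewrite !inE => /orP [/andP [ind ->]|].
    rewrite andbT; apply/forallP => x; apply/implyP => xI; apply/forallP => y; apply/implyP => yI.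
    apply: contraTN ind => gxy; rewrite negb_forall; apply/existsP; exists x.
    rewrite negb_imply xI negb_forall; apply/existsP; exists y.
    by rewrite negb_imply yI negbK gg'.
  case/imsetP => f; rewrite inE => /and4P [_ _ _ /forallP fS] ->.
  rewrite card_graph eqxx andbT; apply/forallP => x; apply/implyP => /imsetP [w _ ->].
  apply/forallP => y; apply/implyP => /imsetP [z _ ->].
  by move: (fS w); rewrite in_setT => /forallP /(_ z); rewrite in_setT.
by have := subset_leq_card sub; rewrite cardsU A12 cards0 subn0 card_imset.
Qed.

Lemma ncol_ge_unmatched d g u v a : col_ok e d -> canonical_cover g -> e u v ->
  (forall c, ~~ g (u, a) (v, c)) -> PDP e k + (k - d.+1) ^ (#|V| - 2) <= ncol V g.
Proof.
move=> ecol gcov euv ha.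
have uv : u != v by apply: contraTneq euv => ->; rewrite eirr.
have [b hb] := unmatched_partner gcov uv ha.
have g'cov := canonical_cover_add_edge gcov euv ha hb.
have g'ab : add_edge g (u, a) (v, b) (u, a) (v, b) by rewrite /add_edge !eqxx orbT.
apply: leq_trans (ncol_add_edge a (@add_edge_subrel _ g _ _) g'ab).
have greedy := card_pinned_greedy a gcov uv (ha b) ecol.
exact: leq_add (PDP_leq_ncol g'cov) greedy.
Qed.

Lemma card_cross_pairs_perfect g : canonical_cover g ->
  (forall u v a, e u v -> exists c, g (u, a) (v, c)) ->
  #|[set q : (V * 'I_k) * (V * 'I_k) | g q.1 q.2 && (q.1.1 != q.2.1)]|
    = #|[set p : V * V | e p.1 p.2]| * k.
Proof.
case=> _ _ _ gmatch gedge perfect.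
pose partner u v a := odflt a [pick c | g (u, a) (v, c)].
have partnerP u v a : e u v -> g (u, a) (v, partner u v a).
  move=> /(perfect _ _ a) [c gc]; rewrite /partner.
  by case: pickP => [//|/(_ c)]; rewrite gc.
pose F (q : (V * V) * 'I_k) := ((q.1.1, q.2), (q.1.2, partner q.1.1 q.1.2 q.2)).
have F_inj : injective F by move=> [[u v] a] [[u' v'] a'] [-> -> -> _].
rewrite -[X in _ * X]card_ord -cardsT -cardsX -(card_imset _ F_inj).
apply: eq_card => -[[u a] [v c]]; rewrite !inE /=; apply/andP/imsetP.
  case=> gac uv; have euv := gedge _ _ gac uv.
  exists ((u, v), a); first by rewrite !inE euv.
  by rewrite /F /= (gmatch _ _ _ _ _ gac (partnerP _ _ a euv)) // eq_sym.
case=> -[[u' v'] a']; rewrite !inE /= => /andP [euv _] [-> -> -> ->].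
by split; [exact: partnerP | apply: contraTneq euv => ->; rewrite eirr].
Qed.

End CanonicalCovers.

Section ApexFibers.
Variables (V X : finType) (e : rel V) (h : rel X) (L : option V -> {set X}) (m : nat).
Hypotheses (hcov : is_cover (join_rel e) h L) (hfold : mfold L m)
  (hperf : perfect_matchings (join_rel e) h L).

(* [Lt t w] is the list L^(t)(w) of H^(t); [relabel t] enumerates these lists,
   turning H^(t) into the cover [Ht t] of G on V * 'I_(m - 1). Both [relabel t]
   and [Ht t] are junk unless t \in L None. *)
Definition Lt (t : X) (w : V) : {set X} :=
  [set x in L (Some w) | x \notin closed_nbhd h t].

Definition relabel (t : X) (p : V * 'I_(m - 1)) : X := nth t (enum (Lt t p.1)) p.2.

Definition Ht (t : X) : rel (V * 'I_(m - 1)) := fun p q => h (relabel t p) (relabel t q).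

Definition cross_rel (t : X) : rel X := fun a b =>
  [&& h a b, a \notin closed_nbhd h t, b \notin closed_nbhd h t &
      [exists u, exists v, [&& u != v, a \in L (Some u) & b \in L (Some v)]]].

Lemma cross_edgesE t : cross_edges h L t = edge_set (cross_rel t).
Proof. by []. Qed.

Lemma cross_rel_irr t : irreflexive (cross_rel t).
Proof. by move=> a; rewrite /cross_rel (cover_irr hcov). Qed.

Lemma cross_rel_sym t : symmetric (cross_rel t).
Proof.
move=> a b; rewrite /cross_rel (cover_sym hcov); congr andb; rewrite andbCA; do 2 congr andb.
by apply/existsP/existsP => -[u /existsP [v /and3P [uv au bv]]];
  exists v; apply/existsP; exists u; rewrite eq_sym uv au bv.
Qed.

Section OneApexVertex.
Variable t : X.
Hypothesis tw : t \in L None.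

Lemma card_Lt w : #|Lt t w| = m - 1.
Proof.
have [y yw hty] : exists2 y, y \in L (Some w) & h t y.
  move/forallP: hperf => /(_ None) /forallP /(_ (Some w)) /= /forallP /(_ t).
  by rewrite tw => /existsP [y /andP [yw hty]]; exists y.
have -> : Lt t w = L (Some w) :\ y.
  apply/setP => x; rewrite !inE negb_or.
  case xw: (x \in L (Some w)); rewrite ?andbT ?andbF //.
  have -> /= : x != t.
    by apply/eqP => xt; rewrite xt in xw; move: (cover_list_uniq hcov tw xw).
  apply/idP/idP => [|xy]; first by apply: contra => /eqP ->.
  apply: contra xy => htx; apply/eqP.
  exact: (cover_matching hcov (isT : join_rel e None (Some w)) tw xw yw htx hty).
move/forallP: hfold => /(_ (Some w)) /eqP <-.
by rewrite (cardsD1 y (L (Some w))) yw addKn.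
Qed.

Lemma relabel_Lt p : relabel t p \in Lt t p.1.
Proof. by rewrite /relabel -mem_enum mem_nth // -cardE card_Lt. Qed.

Lemma relabel_list p : relabel t p \in L (Some p.1).
Proof. by have := relabel_Lt p; rewrite inE => /andP []. Qed.

Lemma relabel_nbhd p : relabel t p \notin closed_nbhd h t.
Proof. by have := relabel_Lt p; rewrite inE => /andP []. Qed.

Lemma relabel_inj : injective (relabel t).
Proof.
move=> [w c] [w' c'] eq_rel.
have ww' : w = w'.
  have := relabel_list (w', c'); rewrite -eq_rel => /(cover_list_uniq hcov (relabel_list (w, c))).
  by case.
subst w'; congr pair; apply: val_inj; apply/eqP.
by move: eq_rel => /eqP; rewrite /relabel nth_uniq ?enum_uniq // -cardE card_Lt.
Qed.

Lemma relabel_onto w x : x \in Lt t w -> exists c, relabel t (w, c) = x.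
Proof.
move=> xw; have ilt : index x (enum (Lt t w)) < m - 1.
  by rewrite -(card_Lt w) cardE index_mem mem_enum.
by exists (Ordinal ilt); rewrite /relabel nth_index ?mem_enum.
Qed.

Lemma canonical_cover_Ht : canonical_cover e (Ht t).
Proof.
have Ht_edge p q : Ht t p q -> p.1 != q.1 -> e p.1 q.1.
  move=> hpq pq; have := cover_edge hcov (relabel_list p) (relabel_list q) hpq.
  by rewrite /= (inj_eq Some_inj) (negbTE pq).
split => //.
- by move=> p q; rewrite /Ht (cover_sym hcov).
- by move=> p; rewrite /Ht (cover_irr hcov).
- move=> p q pq npq; apply: (cover_clique hcov (relabel_list p)).
    by rewrite pq; exact: relabel_list.
  by apply: contra npq => /eqP /relabel_inj ->.
- move=> p x c c' xp g1 g2.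
  have epx : join_rel e (Some p.1) (Some x) by have := Ht_edge _ _ g1; rewrite eq_sym => /(_ xp).
  have := cover_matching hcov epx (relabel_list p) (relabel_list (x, c))
    (relabel_list (x, c')) g1 g2.
  by move/relabel_inj => [].
Qed.

Lemma card_cross_pairs_Ht :
  #|[set p : X * X | cross_rel t p.1 p.2]|
    = #|[set q : (V * 'I_(m - 1)) * (V * 'I_(m - 1)) | Ht t q.1 q.2 && (q.1.1 != q.2.1)]|.
Proof.
pose R (q : (V * 'I_(m - 1)) * (V * 'I_(m - 1))) := (relabel t q.1, relabel t q.2).
have R_inj : injective R by move=> [p q] [p' q'] [/relabel_inj -> /relabel_inj ->].
rewrite -(card_imset _ R_inj); apply: eq_card => -[x y]; rewrite !inE /=.
apply/idP/imsetP => [|[[[u a] [v c]]]]; last first.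
  rewrite inE /= => /andP [hxy uv] [-> ->].
  rewrite /cross_rel [h _ _]hxy !relabel_nbhd /=; apply/existsP; exists u; apply/existsP; exists v.
  by rewrite uv (relabel_list (u, a)) (relabel_list (v, c)).
case/and4P => hxy xN yN /existsP [u /existsP [v /and3P [uv xu yv]]].
have [a xa] : exists a, relabel t (u, a) = x by apply: relabel_onto; rewrite inE xu xN.
have [c yc] : exists c, relabel t (v, c) = y by apply: relabel_onto; rewrite inE yv yN.
exists ((u, a), (v, c)); last by rewrite /R xa yc.
by rewrite inE /= uv andbT /Ht xa yc.
Qed.

Lemma apex_notin_relabel t' (I : {set V * 'I_(m - 1)}) :
  t' \in L None -> t' \notin relabel t @: I.
Proof.
move=> t'w; apply/imsetP => -[q _ t'q].
by have := relabel_list q; rewrite -t'q => /(cover_list_uniq hcov t'w).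
Qed.

Lemma indep_apex_relabel (I : {set V * 'I_(m - 1)}) :
  indep (Ht t) I -> indep h (t |: relabel t @: I).
Proof.
move=> indI.
have t_relabel q : ~~ h t (relabel t q).
  by have := relabel_nbhd q; rewrite inE negb_or => /andP [].
apply/forallP => x; apply/implyP; rewrite in_setU1 => /orP [/eqP ->|/imsetP [q qI ->]];
  apply/forallP => y; apply/implyP; rewrite in_setU1 => /orP [/eqP ->|/imsetP [q' q'I ->]].
- by rewrite (cover_irr hcov).
- exact: t_relabel.
- by rewrite (cover_sym hcov).
- by move/forallP: indI => /(_ q); rewrite qI => /forallP /(_ q'); rewrite q'I.
Qed.

Hypothesis esimple : simple_graph e.

Lemma level_vertex_perfect :
  (forall u v a, e u v -> exists c, Ht t (u, a) (v, c)) -> level_vertex e h L m t.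
Proof.
move=> perfect; have eirr := simple_graph_irr esimple.
rewrite /level_vertex -(eqn_pmul2r (isT : 0 < 2)) /num_edges -/(edge_set e) mulnAC.
rewrite cross_edgesE !card_edge_set ?card_cross_pairs_Ht //;
  [|exact: simple_graph_sym | exact: cross_rel_irr | exact: cross_rel_sym].
by rewrite (card_cross_pairs_perfect eirr canonical_cover_Ht perfect).
Qed.

Lemma not_level_unmatched : ~~ level_vertex e h L m t ->
  exists u v a, e u v /\ forall c, ~~ Ht t (u, a) (v, c).
Proof.
move=> nlev.
have : ~~ [forall u, forall v, forall a, e u v ==> [exists c, Ht t (u, a) (v, c)]].
  apply: contra nlev => /forallP perfect; apply: level_vertex_perfect => u v a euv.
  by move/forallP: (perfect u) => /(_ v) /forallP /(_ a); rewrite euv => /existsP.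
rewrite negb_forall => /existsP [u]; rewrite negb_forall => /existsP [v].
rewrite negb_forall => /existsP [a]; rewrite negb_imply negb_exists => /andP [euv /forallP ha].
by exists u, v, a.
Qed.

Lemma ncol_Ht_geq d : col_ok e d ->
  PDP e (m - 1) + (~~ level_vertex e h L m t) * (m - 1 - d.+1) ^ (#|V| - 2)
    <= ncol V (Ht t).
Proof.
move=> ecol; have eirr := simple_graph_irr esimple.
case: (boolP (level_vertex _ _ _ _ _)) => [_|/not_level_unmatched [u [v [a [euv ha]]]]].
  by rewrite mul0n addn0 (PDP_leq_ncol eirr canonical_cover_Ht).
by rewrite mul1n (ncol_ge_unmatched eirr (simple_graph_sym esimple) ecol canonical_cover_Ht euv ha).
Qed.

End OneApexVertex.

(* An independent transversal of H^(t) together with t is one of H. *)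
Lemma sum_ncol_Ht : \sum_(t in L None) ncol V (Ht t) <= ncol (option V) h.
Proof.
pose T := [set p : X * {set V * 'I_(m - 1)} |
  (p.1 \in L None) && (indep (Ht p.1) p.2 && (#|p.2| == #|V|))].
rewrite -(card_dep_pairs (fun t => t \in L None) (fun t I => indep (Ht t) I && (#|I| == #|V|))).
pose Phi (p : X * {set V * 'I_(m - 1)}) := p.1 |: relabel p.1 @: p.2.
have Phi_inj : {in T &, injective Phi}.
  move=> [t I] [t' I']; rewrite !inE /= => /andP [tw _] /andP [t'w _] PhiE.
  have tt' : t = t'.
    have : t \in Phi (t', I') by rewrite -PhiE setU11.
    by rewrite in_setU1 (negbTE (apex_notin_relabel t'w I' tw)) orbF => /eqP.
  subst t'; congr pair; apply: (imset_inj (relabel_inj tw)).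
  have := congr1 (fun A => A :\ t) PhiE.
  by rewrite /Phi /= !setU1K ?apex_notin_relabel.
rewrite -(card_in_imset Phi_inj); apply: subset_leq_card.
apply/subsetP => _ /imsetP [[t I] TtI ->].
rewrite inE /= in TtI; case/and3P: TtI => tw indI /eqP cardI.
rewrite inE /Phi /= cardsU1 apex_notin_relabel // (card_imset _ (relabel_inj tw)).
by rewrite cardI card_option eqxx andbT indep_apex_relabel.
Qed.
End ApexFibers.

Theorem mainTheorem17 (V : finType) (e : rel V) (d m : nat)
    (X : finType) (h : rel X) (L : option V -> {set X}) (s : nat) :
  simple_graph e -> connected_graph e -> is_col e d -> 3 <= d ->
  d + 3 <= m ->
  is_cover (join_rel e) h L -> mfold L m -> perfect_matchings (join_rel e) h L ->
  s = #|[set t in L None | ~~ level_vertex e h L m t]| ->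
  m * PDP e (m - 1) + s * (m - d - 2) ^ (#|V| - 2) <= ncol (option V) h.
Proof.
move=> esimple _ [ecol _] _ _ hcov hfold hperf ->.
have cardLw : #|L None| = m by move/forallP: hfold => /(_ None) /eqP.
have -> : m - d - 2 = m - 1 - d.+1 by rewrite -!subnDA add1n addn2.
apply: leq_trans (sum_ncol_Ht hcov hfold hperf).
set K := (m - 1 - d.+1) ^ (#|V| - 2).
have fibers : \sum_(t in L None) (PDP e (m - 1) + (~~ level_vertex e h L m t) * K)
    <= \sum_(t in L None) ncol V (Ht (m := m) h L t).
  by apply: leq_sum => t tw; exact: ncol_Ht_geq.
apply: leq_trans fibers.
rewrite big_split /= sum_nat_const cardLw -big_distrl /= leq_add2l leq_mul2r.
by rewrite -big_mkcondr /= sum1dep_card leqnn orbT.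
Qed.
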